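(* Let $(X,* )$ be a proto unital shelf or an idempotent semi-group, and let $a,b\in X$. Then $a*b=b*a$ if and only if $a*b*a=b*a*b$.
   Context: A shelf is a set with a binary operation $*$ satisfying $(a*b)*c=(a*c)*(b*c)$ for all $a,b,c$. A proto unital shelf is a shelf satisfying $a*b=b*(a*b)$ and $a*b=(a*b)*b$ for all $a,b$; such shelves are associative. An idempotent semi-group is an associative magma with $a*a=a$ for all $a$. *)

Definition is_shelf {X : Type} (op : X -> X -> X) : Prop :=
  forall a b c : X, op (op a b) c = op (op a c) (op b c).

Definition is_proto_unital_shelf {X : Type} (op : X -> X -> X) : Prop :=
  is_shelf op /\
  (forall a b : X, op a b = op b (op a b)) /\
  (forall a b : X, op a b = op (op a b) b).

Definition is_idempotent_semigroup {X : Type} (op : X -> X -> X) : Prop :=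
  (forall a b c : X, op (op a b) c = op a (op b c)) /\
  (forall a : X, op a a = a).


(* In a proto unital shelf [a * b * a = b * a], by self-distributivity and the
   two absorption laws: [(a * b) * a = (a * a) * ((b * a) * a)
   = (a * (b * a)) * a = (b * a) * a = b * a].  Hence the braid relation
   [a * b * a = b * a * b] literally reads [b * a = a * b].  In an idempotent
   semigroup both sides of [a * b = b * a] equal [b * a * b] once the braid
   relation holds, because [a * b = (a * b) * (a * b)] and
   [b * a = (b * a) * (b * a)]. *)

Section ProtoUnitalShelf.

Variables (X : Type) (op : X -> X -> X).
Local Notation "x * y" := (op x y).

Hypothesis hX : is_proto_unital_shelf op.

Lemma proto_unital_shelf_mulK (a b : X) : a * b * a = b * a.
Proof.
  destruct hX as [shelf [left_absorb right_absorb]].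
  rewrite shelf.
  transitivity (a * a * (b * a * a)).
  { f_equal; apply right_absorb. }
  rewrite <- shelf, <- (left_absorb b a).
  symmetry; apply right_absorb.
Qed.

Lemma proto_unital_shelf_comm_iff_braid (a b : X) :
  a * b = b * a <-> a * b * a = b * a * b.
Proof.
  rewrite !proto_unital_shelf_mulK.
  split; intros; symmetry; assumption.
Qed.

End ProtoUnitalShelf.

Section IdempotentSemigroup.

Variables (X : Type) (op : X -> X -> X).
Local Notation "x * y" := (op x y).

Hypothesis mulA : forall a b c : X, a * b * c = a * (b * c).
Hypothesis mulxx : forall a : X, a * a = a.

Lemma idempotent_semigroup_braid_of_comm (a b : X) :
  a * b = b * a -> a * b * a = b * a * b.
Proof.
  intros ab_comm.
  rewrite ab_comm, !mulA, mulxx, ab_comm, <- mulA, mulxx.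
  reflexivity.
Qed.

Lemma idempotent_semigroup_comm_of_braid (a b : X) :
  a * b * a = b * a * b -> a * b = b * a.
Proof.
  intros braid.
  assert (ab_eq : a * b = b * a * b).
  { rewrite <- (mulxx (a * b)), <- mulA, braid, !mulA, mulxx.
    reflexivity. }
  assert (ba_eq : b * a = b * a * b).
  { transitivity (b * a * (b * a)); [symmetry; apply mulxx |].
    rewrite (mulA b a (b * a)), <- (mulA a b a), braid.
    rewrite <- (mulA b (b * a) b), <- (mulA b b a), mulxx.
    reflexivity. }
  rewrite ab_eq, <- ba_eq; reflexivity.
Qed.

Lemma idempotent_semigroup_comm_iff_braid (a b : X) :
  a * b = b * a <-> a * b * a = b * a * b.
Proof.
  split.
  - apply idempotent_semigroup_braid_of_comm.
  - apply idempotent_semigroup_comm_of_braid.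
Qed.

End IdempotentSemigroup.

Theorem proposition2p1 (X : Type) (op : X -> X -> X)
  (hX : is_proto_unital_shelf op \/ is_idempotent_semigroup op)
  (a b : X) :
  op a b = op b a <-> op (op a b) a = op (op b a) b.
Proof.
  destruct hX as [shelf | [mulA mulxx]].
  - exact (proto_unital_shelf_comm_iff_braid X op shelf a b).
  - exact (idempotent_semigroup_comm_iff_braid X op mulA mulxx a b).
Qed.
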